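(* Let $E$ be a Banach lattice whose dual space $E'$ is order continuous, and let $X$ be a Banach space. Then every Dunford-Pettis operator $T\colon E\to X$ is $uaw$-Dunford-Pettis.
   Context: All operators are bounded linear operators. A net $(x_\alpha)$ in a Banach lattice $E$ is $uaw$-convergent to $x\in E$ (written $x_\alpha\xrightarrow{uaw}x$) if for every $u\in E_+$ the net $|x_\alpha-x|\wedge u$ converges weakly to $0$. An operator $T\colon E\to X$ from a Banach lattice to a Banach space is Dunford-Pettis if it maps weakly null sequences to norm null sequences. It is $uaw$-Dunford-Pettis if for every norm bounded sequence $(x_n)$ in $E$ with $x_n\xrightarrow{uaw}0$ one has $\|T(x_n)\|\to 0$. *)

From HB Require Import structures.
From mathcomp Require Import all_boot all_order all_algebra.
From mathcomp Require Import all_classical all_reals all_analysis.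
Set Implicit Arguments. Unset Strict Implicit. Unset Printing Implicit Defensive.
Import Order.TTheory GRing.Theory Num.Theory.
Import numFieldNormedType.Exports.
Local Open Scope classical_set_scope.
Local Open Scope ring_scope.

(* A Banach lattice structure on a (real) Banach space E:
   a vector order which is a lattice (joins; meets are derived) and whose norm
   is a lattice norm: |x| <= |y| implies ||x|| <= ||y||. *)
Record banach_lattice (R : realType) (E : completeNormedModType R) := BanachLattice {
  ble : E -> E -> Prop;
  bjoin : E -> E -> E;
  ble_refl : forall x, ble x x;
  ble_trans : forall x y z, ble x y -> ble y z -> ble x z;
  ble_anti : forall x y, ble x y -> ble y x -> x = y;
  ble_add : forall x y z, ble x y -> ble (x + z) (y + z);
  ble_scale : forall (a : R) x y, 0 <= a -> ble x y -> ble (a *: x) (a *: y);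
  bjoin_ubl : forall x y, ble x (bjoin x y);
  bjoin_ubr : forall x y, ble y (bjoin x y);
  bjoin_lub : forall x y z, ble x z -> ble y z -> ble (bjoin x y) z;
  bnorm_mono : forall x y,
    ble (bjoin x (- x)) (bjoin y (- y)) -> `|x| <= `|y|
}.

Section BL.
Variables (R : realType) (E : completeNormedModType R) (L : banach_lattice E).

Definition bmeet (x y : E) : E := - bjoin L (- x) (- y).
Definition babs (x : E) : E := bjoin L x (- x).

Definition is_dual (f : E -> R) : Prop :=
  (forall (a : R) (x y : E), f (a *: x + y) = a * f x + f y) /\ continuous f.

Definition dual_le (f g : E -> R) : Prop :=
  forall x, ble L 0 x -> f x <= g x.

(* The dual E' has order continuous norm: for every net (f_a) in E' with
   f_a decreasing to 0 (i.e. decreasing with infimum 0 in E'), ||f_a|| -> 0.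
   Nets are indexed by an arbitrary nonempty directed preordered type. *)
Definition dual_order_continuous : Prop :=
  forall (I : Type) (leI : I -> I -> Prop),
    (forall i, leI i i) ->
    (forall i j k, leI i j -> leI j k -> leI i k) ->
    inhabited I ->
    (forall i j, exists k, leI i k /\ leI j k) ->
    forall f : I -> E -> R,
      (forall i, is_dual (f i)) ->
      (forall i j, leI i j -> dual_le (f j) (f i)) ->
      (forall i, dual_le (fun _ => 0) (f i)) ->
      (forall h, is_dual h -> (forall i, dual_le h (f i)) ->
                 dual_le h (fun _ => 0)) ->
      forall eps : R, 0 < eps ->
        exists i0, forall i, leI i0 i ->
          forall x : E, `|x| <= 1 -> `|f i x| <= eps.

Definition weakly_null (x : nat -> E) : Prop :=
  forall f, is_dual f -> (fun n => f (x n)) @ \oo --> (0 : R).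

Definition uaw_null (x : nat -> E) : Prop :=
  forall u, ble L 0 u -> weakly_null (fun n => bmeet (babs (x n)) u).

End BL.

Section Ops.
Variables (R : realType) (E : completeNormedModType R) (L : banach_lattice E)
  (X : completeNormedModType R).

Definition is_operator (T : E -> X) : Prop :=
  (forall (a : R) (x y : E), T (a *: x + y) = a *: T x + T y) /\ continuous T.

Definition dunford_pettis (T : E -> X) : Prop :=
  forall x : nat -> E, weakly_null x -> (fun n => T (x n)) @ \oo --> (0 : X).

Definition uaw_dunford_pettis (T : E -> X) : Prop :=
  forall x : nat -> E, (exists M : R, forall n, `|x n| <= M) ->
    uaw_null L x -> (fun n => T (x n)) @ \oo --> (0 : X).
End Ops.

(* Since T is Dunford-Pettis, it suffices that a norm bounded uaw-null sequence
   (x_n) is weakly null.  Writing f = f^+ - f^- (Riesz-Kantorovich), it suffices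
   that g(|x_n|) -> 0 for every positive g in E', knowing g(|x_n| /\ u) -> 0 for
   every u >= 0.  Otherwise some subsequence z_k has g(z_k) > d and
   g(z_k /\ 4^k (z_0 + ... + z_(k-1))) < d/4; with x = sum_k 2^-k z_k the elements
   e_k = (z_k - 4^k (z_0 + ... + z_(k-1)) - 2^-k x)^+ are pairwise disjoint and
   g(e_k) >= d/2 eventually.  The components of g in the bands generated by the
   e_k are disjoint, so the tails of their sum decrease to 0 in E'; by order
   continuity of E' these tails are small in norm, which forces g(e_k) -> 0. *)

From HB Require Import structures.
From mathcomp Require Import all_boot all_order all_algebra.
From mathcomp Require Import all_classical all_reals all_analysis.
From mathcomp Require Import lra.
Set Implicit Arguments. Unset Strict Implicit. Unset Printing Implicit Defensive.
Import Order.TTheory GRing.Theory Num.Theory.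
Import numFieldNormedType.Exports.
Local Open Scope classical_set_scope.
Local Open Scope ring_scope.

Section SupImage.
Variables (R : realType) (T : Type) (P : set T) (h : T -> R) (B : R).
Hypothesis hB : forall w, P w -> h w <= B.

Lemma sup_image_ub w : P w -> h w <= sup (h @` P).
Proof. by move=> Pw; apply: ub_le_sup; [exists B => _ [v Pv <-]; apply: hB|exists w]. Qed.

Lemma sup_image_le w0 : P w0 -> sup (h @` P) <= B.
Proof. by move=> P0; apply: ge_sup; [exists (h w0), w0|move=> _ [v Pv <-]; apply: hB]. Qed.

Lemma sup_image_adherent w0 (eps : R) : 0 < eps -> P w0 ->
  exists2 w, P w & sup (h @` P) - eps < h w.
Proof.
move=> e0 P0; have hs : has_sup (h @` P).
  by split; [exists (h w0), w0|exists B => _ [v Pv <-]; apply: hB].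
by have [_ [w Pw <-] hw] := sup_adherent e0 hs; exists w.
Qed.
End SupImage.

Lemma partial_sum_choice (V : zmodType) (y : nat -> V) (P : nat -> V -> nat -> Prop) :
  (forall k s, exists n, P k s n) ->
  exists phi : nat -> nat, forall k, P k (\sum_(j < k) y (phi j)) (phi k).
Proof.
move=> hP; pose pick k s := sval (cid (hP k s)).
pose fix state k : nat * V := if k is k'.+1 then
  let s := (state k').2 + y (state k').1 in (pick k s, s) else (pick 0%N 0, 0).
have state_sum k : (state k).2 = \sum_(j < k) y (state j).1.
  by elim: k => [|k IH]; rewrite ?big_ord0 // big_ord_recr /= IH.
exists (fun k => (state k).1) => k; rewrite -state_sum.
by case: k => [|k]; exact: svalP (cid _).
Qed.

Arguments bmeet : simpl never.
Arguments babs : simpl never.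

Section BanachLattice.
Variables (R : realType) (E : completeNormedModType R) (L : banach_lattice E).
Local Notation "x <=: y" := (ble L x y) (at level 70).
Local Notation "x ⊔ y" := (bjoin L x y) (at level 40, left associativity).
Local Notation "x ⊓ y" := (bmeet L x y) (at level 40, left associativity).

Definition bpos (x : E) : E := x ⊔ 0.
Definition bneg (x : E) : E := (- x) ⊔ 0.
Definition bdisjoint (x y : E) : Prop := x ⊓ y = 0.
Arguments bpos : simpl never.
Arguments bneg : simpl never.

Local Hint Resolve ble_refl bjoin_ubl bjoin_ubr : core.

Lemma ble_addl x y z : x <=: y -> z + x <=: z + y.
Proof. by move=> h; rewrite ![z + _]addrC; apply: ble_add. Qed.

Lemma bleD a b c d : a <=: b -> c <=: d -> a + c <=: b + d.
Proof. by move=> h1 h2; apply: ble_trans (ble_add _ h1) (ble_addl _ h2). Qed.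

Lemma bsubr_ge0 x y : 0 <=: y - x <-> x <=: y.
Proof.
split=> h; first by have := ble_add x h; rewrite add0r subrK.
by have := ble_add (- x) h; rewrite subrr.
Qed.

Lemma bleN2 x y : x <=: y -> - y <=: - x.
Proof.
move=> h; have := ble_add (- x - y) h.
by rewrite addrA subrr add0r addrA addrAC subrr add0r.
Qed.

Lemma bscaler_ge0 (c : R) x : 0 <= c -> 0 <=: x -> 0 <=: c *: x.
Proof. by move=> c0 h; have := ble_scale c0 h; rewrite scaler0. Qed.

Lemma bleZ2r (c d : R) x : c <= d -> 0 <=: x -> c *: x <=: d *: x.
Proof.
move=> cd h; apply/bsubr_ge0; rewrite -scalerBl.
by apply: bscaler_ge0; rewrite ?subr_ge0.
Qed.

Lemma baddr_ge0 a b : 0 <=: a -> 0 <=: b -> 0 <=: a + b.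
Proof. by move=> h1 h2; have := bleD h1 h2; rewrite addr0. Qed.

Lemma bsumr_ge0 n (F : nat -> E) : (forall k, 0 <=: F k) ->
  0 <=: \sum_(k < n) F k.
Proof.
move=> h; elim: n => [|n IH]; first by rewrite big_ord0.
by rewrite big_ord_recr /=; apply: baddr_ge0.
Qed.

Lemma bterm_le_sum n (F : nat -> E) k : (forall i, 0 <=: F i) -> (k < n)%N ->
  F k <=: \sum_(i < n) F i.
Proof.
move=> F0; elim: n => [//|n IH]; rewrite ltnS leq_eqVlt => /orP[/eqP->|kn].
  by rewrite big_ord_recr /= -{1}[F n]add0r; apply/ble_add/bsumr_ge0.
by rewrite big_ord_recr /= -[F k]addr0; apply: bleD; [exact: IH|exact: F0].
Qed.

Lemma bjoinC x y : x ⊔ y = y ⊔ x.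
Proof. by apply: ble_anti; apply: bjoin_lub. Qed.

Lemma ble_join2 x y x' y' : x <=: x' -> y <=: y' -> x ⊔ y <=: x' ⊔ y'.
Proof.
move=> h1 h2; apply: bjoin_lub.
  exact: ble_trans h1 (bjoin_ubl L _ _).
exact: ble_trans h2 (bjoin_ubr L _ _).
Qed.

Lemma bjoin_r x y : x <=: y -> x ⊔ y = y.
Proof. by move=> h; apply: ble_anti; first exact: bjoin_lub. Qed.

Lemma bjoin_addr x y z : (x + z) ⊔ (y + z) = x ⊔ y + z.
Proof.
apply: ble_anti; first by apply: bjoin_lub; apply: ble_add.
apply/bsubr_ge0; rewrite opprD addrA addrAC; apply/bsubr_ge0.
by apply: bjoin_lub; rewrite -[X in X <=: _](addrK z); apply: ble_add.
Qed.

Lemma bjoin_scaler (c : R) x y : 0 < c -> (c *: x) ⊔ (c *: y) = c *: (x ⊔ y).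
Proof.
move=> c0; have c0' := ltW c0; have cN0 := lt0r_neq0 c0; apply: ble_anti.
  by apply: bjoin_lub; apply: ble_scale.
have ci : 0 <= c^-1 by rewrite invr_ge0.
have : x ⊔ y <=: c^-1 *: ((c *: x) ⊔ (c *: y)).
  by apply: bjoin_lub; [rewrite -{1}[x](scalerK cN0)|
    rewrite -{1}[y](scalerK cN0)]; apply: ble_scale.
by move/(ble_scale c0'); rewrite scalerA divff // scale1r.
Qed.

Lemma bmeet_lel x y : x ⊓ y <=: x.
Proof. by rewrite /bmeet -{2}[x]opprK; apply/bleN2. Qed.

Lemma bmeet_ler x y : x ⊓ y <=: y.
Proof. by rewrite /bmeet -{2}[y]opprK; apply/bleN2. Qed.

Lemma bmeet_glb x y z : z <=: x -> z <=: y -> z <=: x ⊓ y.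
Proof. by move=> h1 h2; rewrite /bmeet -[z]opprK; apply/bleN2/bjoin_lub; apply: bleN2. Qed.

Local Hint Resolve bmeet_lel bmeet_ler : core.

Lemma bmeetC x y : x ⊓ y = y ⊓ x.
Proof. by rewrite /bmeet bjoinC. Qed.

Lemma ble_meet2 x y x' y' : x <=: x' -> y <=: y' -> x ⊓ y <=: x' ⊓ y'.
Proof.
by move=> h1 h2; apply: bmeet_glb; [apply: ble_trans h1|apply: ble_trans h2].
Qed.

Lemma bmeet_l x y : x <=: y -> x ⊓ y = x.
Proof. by move=> h; apply: ble_anti; last exact: bmeet_glb. Qed.

Lemma bmeet_ge0 a b : 0 <=: a -> 0 <=: b -> 0 <=: a ⊓ b.
Proof. exact: bmeet_glb. Qed.

Lemma bmeet_addr x y z : (x + z) ⊓ (y + z) = x ⊓ y + z.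
Proof. by rewrite /bmeet !opprD bjoin_addr opprD opprK. Qed.

Lemma bmeet_scaler (c : R) x y : 0 <= c -> (c *: x) ⊓ (c *: y) = c *: (x ⊓ y).
Proof.
rewrite le0r => /orP[/eqP->|c0]; first by rewrite !scale0r bmeet_l.
by rewrite /bmeet -!scalerN bjoin_scaler // scalerN.
Qed.

Lemma bmeet_add_join x y : x ⊓ y + x ⊔ y = x + y.
Proof.
have := bjoin_addr (- x) (- y) (x + y).
rewrite addKr [x + y]addrC addKr bjoinC => ->.
by rewrite /bmeet addKr.
Qed.

Lemma bpos_ge0 x : 0 <=: bpos x. Proof. exact: bjoin_ubr. Qed.
Lemma bneg_ge0 x : 0 <=: bneg x. Proof. exact: bjoin_ubr. Qed.
Local Hint Resolve bpos_ge0 bneg_ge0 : core.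

Lemma ble_pos2 x y : x <=: y -> bpos x <=: bpos y.
Proof. by move=> h; apply: ble_join2. Qed.

Lemma bposBneg x : bpos x - bneg x = x.
Proof. by apply/eqP; rewrite subr_eq /bneg addrC -bjoin_addr addNr add0r bjoinC. Qed.

Lemma bpos_id a : 0 <=: a -> bpos a = a.
Proof. by move=> h; rewrite /bpos bjoinC bjoin_r. Qed.

Lemma bneg_id a : 0 <=: a -> bneg a = 0.
Proof. by move=> h; rewrite /bneg bjoin_r // -oppr0; apply: bleN2. Qed.

Lemma bpos_scaler (c : R) x : 0 <= c -> bpos (c *: x) = c *: bpos x.
Proof.
rewrite le0r => /orP[/eqP->|c0]; first by rewrite !scale0r /bpos bjoin_r.
by rewrite /bpos -bjoin_scaler // scaler0.
Qed.

Lemma babs_ge0 x : 0 <=: babs L x.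
Proof.
have h : 0 <=: (2 : R) *: babs L x.
  by rewrite scaler_nat mulr2n -(subrr x); apply: bleD; [apply: bjoin_ubl|apply: bjoin_ubr].
have := ble_scale (_ : 0 <= 2^-1) h.
by rewrite scaler0 scalerA mulVf ?pnatr_eq0 // scale1r; apply; rewrite invr_ge0.
Qed.
Local Hint Resolve babs_ge0 : core.

Lemma bpos_join_neg x : bpos x ⊔ bneg x = babs L x.
Proof.
apply: ble_anti.
  by apply: bjoin_lub; apply: bjoin_lub => //; [apply: bjoin_ubl|apply: bjoin_ubr].
apply: bjoin_lub.
  exact: ble_trans (bjoin_ubl L x 0) (bjoin_ubl L _ _).
exact: ble_trans (bjoin_ubl L (- x) 0) (bjoin_ubr L _ _).
Qed.

Lemma bpos_add_neg x : bpos x + bneg x = bpos x ⊔ bneg x.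
Proof.
have e : x + bneg x = bpos x by rewrite -{1}(bposBneg x) subrK.
by rewrite {1}/bpos -bjoin_addr e add0r.
Qed.

Lemma babs_pos_neg x : babs L x = bpos x + bneg x.
Proof. by rewrite bpos_add_neg bpos_join_neg. Qed.

Lemma babs_id a : 0 <=: a -> babs L a = a.
Proof. by move=> h; rewrite babs_pos_neg bpos_id // bneg_id // addr0. Qed.

Lemma bpos_le_abs x : bpos x <=: babs L x.
Proof. by rewrite -bpos_join_neg. Qed.

Lemma bneg_le_abs x : bneg x <=: babs L x.
Proof. by rewrite -bpos_join_neg. Qed.

Lemma bdisjoint_pos_neg x : bdisjoint (bpos x) (bneg x).
Proof. by apply/(addIr (bpos x ⊔ bneg x)); rewrite bmeet_add_join add0r bpos_add_neg. Qed.

Lemma bmeet_add_pos z a : z ⊓ a + bpos (z - a) = z.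
Proof. by rewrite /bpos -[0](subrr a) bjoin_addr addrA bmeet_add_join addrK. Qed.

Lemma bnorm_le_abs x y : babs L x <=: babs L y -> `|x| <= `|y|.
Proof. exact: bnorm_mono. Qed.

Lemma bnorm_le a b : 0 <=: a -> a <=: b -> `|a| <= `|b|.
Proof. by move=> h0 h; apply: bnorm_le_abs; rewrite !babs_id //; apply: ble_trans h. Qed.

Lemma bnorm_pos x : `|bpos x| <= `|x|.
Proof. by apply: bnorm_le_abs; rewrite babs_id //; apply: bpos_le_abs. Qed.

Lemma bnorm_neg x : `|bneg x| <= `|x|.
Proof. by apply: bnorm_le_abs; rewrite babs_id //; apply: bneg_le_abs. Qed.

Lemma bnorm_abs x : `|babs L x| = `|x|.
Proof.
by apply/eqP; rewrite eq_le; apply/andP; split; apply: bnorm_le_abs;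
  rewrite (babs_id (babs_ge0 x)).
Qed.

Lemma bmeet_subadd u b c : 0 <=: u -> 0 <=: b -> 0 <=: c ->
  u ⊓ (b + c) <=: u ⊓ b + u ⊓ c.
Proof.
move=> hu hb hc.
have h1 : u ⊓ (b + c) <=: u ⊓ b + c.
  rewrite -{1}[u](subrK c) bmeet_addr; apply/ble_add/ble_meet2 => //.
  by rewrite -{2}[u]addr0; apply/ble_addl; rewrite -oppr0; apply: bleN2.
have h2 : u ⊓ (b + c) <=: u ⊓ b + u.
  by apply: ble_trans (bmeet_lel _ _) _; rewrite -{1}[u]add0r; apply/ble_add/bmeet_glb.
apply: ble_trans (bmeet_glb h1 h2) _.
by rewrite ![u ⊓ b + _]addrC bmeet_addr [c ⊓ u]bmeetC addrC.
Qed.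

Lemma bmeet_superadd a b s t : a ⊓ s + b ⊓ t <=: (a + b) ⊓ (s + t).
Proof. by apply: bmeet_glb; apply: bleD. Qed.

Lemma bdisjoint_pos (al : R) p q : 0 < al -> al *: p + q <=: 0 ->
  bdisjoint (bpos p) (bpos q).
Proof.
move=> al0 h.
have hq : bpos q <=: al *: bneg p.
  rewrite -bpos_scaler ?ltW //; apply: ble_pos2.
  by have := ble_add (- (al *: p)) h; rewrite addrC addKr add0r scalerN.
set be := 1 + al.
have be0 : 0 <= be by rewrite addr_ge0 // ltW.
have hp : bpos p <=: be *: bpos p.
  by rewrite -{1}[bpos p]scale1r; apply: bleZ2r; rewrite // lerDl ltW.
have hn : al *: bneg p <=: be *: bneg p by apply: bleZ2r; rewrite // lerDr.
apply: ble_anti; last exact: bmeet_ge0.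
apply: ble_trans (ble_meet2 hp (ble_trans hq hn)) _.
by rewrite bmeet_scaler // bdisjoint_pos_neg scaler0.
Qed.

Lemma bsum_disjoint_le n (w : nat -> E) a :
  (forall k, 0 <=: w k) -> (forall k, w k <=: a) ->
  (forall j k, (j < k)%N -> bdisjoint (w j) (w k)) ->
  \sum_(k < n) w k <=: a.
Proof.
move=> w0 wa wd.
have S0 m : 0 <=: \sum_(k < m) w k by apply: bsumr_ge0.
have Sd m i : (m <= i)%N -> bdisjoint (\sum_(k < m) w k) (w i).
  rewrite /bdisjoint; elim: m i => [|m IH] i im.
    by rewrite big_ord0 (bmeet_l (w0 i)).
  apply: ble_anti; last exact: bmeet_ge0.
  rewrite big_ord_recr /= bmeetC; apply: ble_trans (bmeet_subadd (w0 i) (S0 m) (w0 m)) _.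
  by rewrite bmeetC IH ?(leq_trans _ im) // add0r bmeetC wd.
elim: n => [|n IH]; first by rewrite big_ord0; apply: ble_trans (wa 0%N).
rewrite big_ord_recr /= -bmeet_add_join (Sd _ _ (leqnn n)) add0r.
exact: bjoin_lub.
Qed.

Lemma bcone_closed (w : nat -> E) l :
  w @ \oo --> l -> (\forall n \near \oo, 0 <=: w n) -> 0 <=: l.
Proof.
move=> cw w0.
suff nl : bneg l = 0 by rewrite -(bposBneg l) nl subr0.
apply/normr0_eq0/eqP; rewrite eq_le normr_ge0 andbT.
apply/ler_addgt0Pr => e e0; rewrite add0r.
near \oo => n; apply: le_trans (_ : `|w n - l| <= e).
  apply: bnorm_le_abs; rewrite babs_id //; apply: ble_trans (bpos_le_abs _).
  by apply: ble_pos2; rewrite -{1}[- l]add0r; apply: ble_add; near: n.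
by rewrite -normrN opprB; near: n; apply: cvgr_dist_le.
Unshelve. all: by end_near.
Qed.

Lemma bdisjoint_le a b a' b' : 0 <=: a -> 0 <=: b -> a <=: a' -> b <=: b' ->
  bdisjoint a' b' -> bdisjoint a b.
Proof.
move=> a0 b0 aa bb dis; apply: ble_anti; last exact: bmeet_ge0.
by rewrite -dis; apply: ble_meet2.
Qed.

Section Dual.
Variable f : E -> R.
Hypothesis hf : is_dual f.

Let flin : {linear E -> R^o} := HB.pack f (GRing.isLinear.Build R E R^o _ f hf.1).

Lemma dual0 : f 0 = 0. Proof. exact: (linear0 flin). Qed.
Lemma dualD x y : f (x + y) = f x + f y. Proof. exact: (linearD flin). Qed.
Lemma dualB x y : f (x - y) = f x - f y. Proof. exact: (linearB flin). Qed.
Lemma dualZ a x : f (a *: x) = a * f x. Proof. exact: (linearZZ flin). Qed.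
Lemma dual_sum n (F : nat -> E) : f (\sum_(k < n) F k) = \sum_(k < n) f (F k).
Proof. exact: (linear_sum flin). Qed.

Lemma dual_bounded : exists2 C, 0 < C & forall z, `|f z| <= C * `|z|.
Proof.
have /linear_boundedP [M [_ HM]] := continuous_linear_bounded 0 (hf.2 0 : {for 0, continuous flin}).
exists (`|M| + 1); first by rewrite ltr_pwDr.
by apply: HM; rewrite (le_lt_trans (ler_norm M)) // ltrDl.
Qed.
End Dual.

Definition is_pos_dual (g : E -> R) : Prop := is_dual g /\ dual_le L (fun _ => 0) g.

Lemma pos_dual_le g : is_pos_dual g -> forall a b, a <=: b -> g a <= g b.
Proof. by move=> [hg hp] a b /bsubr_ge0/hp; rewrite dualB // subr_ge0. Qed.

Lemma pos_dual_abs g x : is_pos_dual g -> `|g x| <= g (babs L x).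
Proof.
move=> [hg hp]; rewrite -{1}(bposBneg x) babs_pos_neg dualB // dualD //.
have := hp _ (bpos_ge0 x); have := hp _ (bneg_ge0 x); rewrite ler_norml /=; lra.
Qed.

Definition cone_ext (p : E -> R) (z : E) : R := p (bpos z) - p (bneg z).

Section ConeExtension.
Variables (p : E -> R) (C : R).
Hypothesis padd : forall a b, 0 <=: a -> 0 <=: b -> p (a + b) = p a + p b.
Hypothesis pscale : forall (c : R) a, 0 < c -> 0 <=: a -> p (c *: a) = c * p a.
Hypothesis C0 : 0 <= C.
Hypothesis pbound : forall a, 0 <=: a -> 0 <= p a /\ p a <= C * `|a|.

Let p0 : p 0 = 0.
Proof. by apply/(addrI (p 0)); rewrite -padd // !addr0. Qed.

Lemma cone_ext_diff z a b : 0 <=: a -> 0 <=: b -> z = a - b ->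
  cone_ext p z = p a - p b.
Proof.
move=> ha hb e.
have : p (bpos z + b) = p (a + bneg z).
  by congr p; rewrite -[bpos z](subrK (bneg z)) bposBneg e addrAC subrK.
rewrite !padd // /cone_ext => e2; apply/eqP.
by rewrite subr_eq addrAC eq_sym subr_eq e2 addrC.
Qed.

Lemma cone_extE a : 0 <=: a -> cone_ext p a = p a.
Proof. by move=> ha; rewrite (@cone_ext_diff _ a 0) ?p0 ?subr0. Qed.

Lemma cone_extD x y : cone_ext p (x + y) = cone_ext p x + cone_ext p y.
Proof.
have ha := baddr_ge0 (bpos_ge0 x) (bpos_ge0 y).
have hb := baddr_ge0 (bneg_ge0 x) (bneg_ge0 y).
rewrite (cone_ext_diff ha hb); last by rewrite opprD addrACA !bposBneg.
by rewrite !padd // /cone_ext; lra.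
Qed.

Lemma cone_extN x : cone_ext p (- x) = - cone_ext p x.
Proof.
rewrite (@cone_ext_diff _ (bneg x) (bpos x)) //; first by rewrite /cone_ext opprB.
by rewrite -opprB bposBneg.
Qed.

Lemma cone_extZ c x : cone_ext p (c *: x) = c * cone_ext p x.
Proof.
wlog c0 : c x / 0 <= c => [hw|].
  have [c0|c0] := leP 0 c; first exact: hw.
  have h : cone_ext p ((- c) *: x) = - c * cone_ext p x by rewrite hw ?oppr_ge0 ?ltW.
  by rewrite -[c *: x]opprK -scaleNr cone_extN h mulNr opprK.
have pZ a : 0 <=: a -> p (c *: a) = c * p a.
  move: c0; rewrite le0r => /orP[/eqP->|c0] ha; last exact: pscale.
  by rewrite scale0r p0 mul0r.
rewrite (@cone_ext_diff _ (c *: bpos x) (c *: bneg x)); last 1 first.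
- by rewrite -scalerBr bposBneg.
- by rewrite !pZ // /cone_ext mulrBr.
- exact: bscaler_ge0.
- exact: bscaler_ge0.
Qed.

Lemma cone_ext_bound z : `|cone_ext p z| <= 2 * C * `|z|.
Proof.
rewrite /cone_ext; apply: le_trans (ler_normB _ _) _.
have [h1 h2] := pbound (bpos_ge0 z); have [h3 h4] := pbound (bneg_ge0 z).
rewrite !ger0_norm //.
have := ler_wpM2l C0 (bnorm_pos z); have := ler_wpM2l C0 (bnorm_neg z); lra.
Qed.

Lemma cone_ext_pos_dual : is_pos_dual (cone_ext p).
Proof.
have lin : forall (a : R) x y, cone_ext p (a *: x + y) = a * cone_ext p x + cone_ext p y.
  by move=> a x y; rewrite cone_extD cone_extZ.
pose el : {linear E -> R^o} := HB.pack (cone_ext p) (GRing.isLinear.Build R E R^o _ _ lin).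
split; last by move=> a ha; rewrite cone_extE //; case: (pbound ha).
split=> //; apply: (@bounded_linear_continuous _ _ _ el); apply/linear_boundedP.
near=> r => x; apply: le_trans (cone_ext_bound x) _.
apply: ler_wpM2r; first exact: normr_ge0.
by near: r; apply: nbhs_pinfty_ge; rewrite num_real.
Unshelve. all: by end_near.
Qed.
End ConeExtension.

(* Riesz-Kantorovich: f^+(a) = sup {f w | 0 <= w <= a} for a >= 0. *)
Definition rk_sup (g : E -> R) (a : E) : R := sup (g @` [set w | 0 <=: w /\ w <=: a]).
Definition dual_pos (g : E -> R) : E -> R := cone_ext (rk_sup g).
Definition dual_neg (g : E -> R) : E -> R := cone_ext (fun a => rk_sup g a - g a).

Section RieszKantorovich.
Variables (g : E -> R) (C : R).
Hypothesis hg : is_dual g.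
Hypothesis C0 : 0 <= C.
Hypothesis hC : forall z, `|g z| <= C * `|z|.

Let rk_bounded a w : 0 <=: w /\ w <=: a -> g w <= C * `|a|.
Proof.
move=> [h0 h1]; apply: le_trans (ler_norm _) _; apply: le_trans (hC _) _.
exact/ler_wpM2l/bnorm_le.
Qed.

Lemma rk_sup_ub a w : 0 <=: w -> w <=: a -> g w <= rk_sup g a.
Proof.
by move=> h0 h1; apply: (sup_image_ub (P := [set w | 0 <=: w /\ w <=: a]) (@rk_bounded a)).
Qed.

Lemma rk_sup_le a B : 0 <=: a -> (forall w, 0 <=: w -> w <=: a -> g w <= B) ->
  rk_sup g a <= B.
Proof. by move=> ha hB; apply: (@sup_image_le _ _ _ _ _ _ 0) => // w []; apply: hB. Qed.

Lemma rk_sup_ge a : 0 <=: a -> g a <= rk_sup g a.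
Proof. by move=> ha; apply: rk_sup_ub. Qed.

Lemma rk_sup_ge0 a : 0 <=: a -> 0 <= rk_sup g a.
Proof. by move=> ha; rewrite -(dual0 hg); apply: rk_sup_ub. Qed.

Lemma rk_sup_bound a : 0 <=: a -> rk_sup g a <= C * `|a|.
Proof. by move=> ha; apply: rk_sup_le => // w h0 h1; apply: rk_bounded. Qed.

Lemma rk_supD a b : 0 <=: a -> 0 <=: b -> rk_sup g (a + b) = rk_sup g a + rk_sup g b.
Proof.
move=> ha hb; apply/eqP; rewrite eq_le; apply/andP; split.
  apply: rk_sup_le => [|w h0 h1]; first exact: baddr_ge0.
  rewrite -(bmeet_add_pos w a) dualD //; apply: lerD.
    by apply: rk_sup_ub; [apply: bmeet_ge0|apply: bmeet_ler].
  apply: rk_sup_ub => //; apply: bjoin_lub => //.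
  by apply/bsubr_ge0; rewrite opprB addrA [b + a]addrC; apply/bsubr_ge0.
rewrite -lerBrDr; apply: rk_sup_le => // w1 h10 h11.
rewrite lerBrDr addrC -lerBrDr; apply: rk_sup_le => // w2 h20 h21.
by rewrite lerBrDr addrC -dualD //; apply: rk_sup_ub; [apply: baddr_ge0|apply: bleD].
Qed.

Lemma rk_supZ (c : R) a : 0 < c -> 0 <=: a -> rk_sup g (c *: a) = c * rk_sup g a.
Proof.
move=> c0 ha; have cN0 := lt0r_neq0 c0; have ci : 0 <= c^-1 by rewrite invr_ge0 ltW.
apply/eqP; rewrite eq_le; apply/andP; split.
  apply: rk_sup_le => [|w h0 h1]; first exact/bscaler_ge0/ha/ltW.
  rewrite -[w](scalerKV cN0) dualZ // ler_pM2l //.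
  apply: rk_sup_ub; first exact: bscaler_ge0.
  by rewrite -[a](scalerK cN0); apply: ble_scale.
rewrite -ler_pdivlMl //; apply: rk_sup_le => // w h0 h1.
rewrite ler_pdivlMl // -dualZ //; apply: rk_sup_ub; first exact/bscaler_ge0/h0/ltW.
exact/ble_scale/h1/ltW.
Qed.

Lemma dual_pos_pos_dual : is_pos_dual (dual_pos g).
Proof.
apply: (cone_ext_pos_dual rk_supD rk_supZ C0).
by move=> a ha; split; [apply: rk_sup_ge0|apply: rk_sup_bound].
Qed.

Lemma dual_neg_pos_dual : is_pos_dual (dual_neg g).
Proof.
apply: (@cone_ext_pos_dual _ (2 * C)); last 1 first.
- move=> a ha; have := rk_sup_ge ha; have := rk_sup_bound ha; have := hC a.
  by have := normr_ge0 a; rewrite ler_norml; nra.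
- by move=> a b ha hb; rewrite rk_supD // dualD //; lra.
- by move=> c a c0 ha; rewrite rk_supZ // dualZ //; lra.
- by rewrite mulr_ge0.
Qed.

Lemma dual_posBneg x : dual_pos g x - dual_neg g x = g x.
Proof.
have := dualB hg (bpos x) (bneg x); rewrite bposBneg /dual_pos /dual_neg /cone_ext.
lra.
Qed.
End RieszKantorovich.

(* [band_part g e] is the component of [g] in the band of E' carried by [e]. *)
Definition band_sup (g : E -> R) (e a : E) : R :=
  sup ((fun t => g (a ⊓ (t *: e))) @` [set t | 0 <= t]).
Definition band_part (g : E -> R) (e : E) : E -> R := cone_ext (band_sup g e).

Section BandPart.
Variables (g : E -> R) (e : E).
Hypothesis hg : is_pos_dual g.
Hypothesis e0 : 0 <=: e.

Let band_bounded a t : 0 <= t -> g (a ⊓ (t *: e)) <= g a.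
Proof. by move=> _; apply/(pos_dual_le hg)/bmeet_lel. Qed.

Lemma band_sup_ub a t : 0 <= t -> g (a ⊓ (t *: e)) <= band_sup g e a.
Proof. exact: (sup_image_ub (P := [set t | 0 <= t]) (@band_bounded a)). Qed.

Lemma band_sup_le a B : (forall t, 0 <= t -> g (a ⊓ (t *: e)) <= B) ->
  band_sup g e a <= B.
Proof. by move=> hB; apply: (@sup_image_le _ _ _ _ _ hB 0). Qed.

Lemma band_sup_adherent a eps : 0 < eps ->
  exists2 t, 0 <= t & band_sup g e a - eps < g (a ⊓ (t *: e)).
Proof. by move=> ep; apply: (@sup_image_adherent _ _ _ _ _ (@band_bounded a) 0). Qed.

Lemma band_sup_ge0 a : 0 <=: a -> 0 <= band_sup g e a.
Proof.
move=> ha; have := band_sup_ub a (lexx 0).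
by rewrite scale0r bmeetC bmeet_l // dual0 //; case: hg.
Qed.

Lemma band_sup_le_dual a : band_sup g e a <= g a.
Proof. exact/band_sup_le/band_bounded. Qed.

Lemma band_supD a b : 0 <=: a -> 0 <=: b ->
  band_sup g e (a + b) = band_sup g e a + band_sup g e b.
Proof.
have gD := dualD hg.1.
move=> ha hb; apply/eqP; rewrite eq_le; apply/andP; split.
  apply: band_sup_le => t t0; have te : 0 <=: t *: e by exact: bscaler_ge0.
  apply: le_trans (pos_dual_le hg (_ : _ <=: (t *: e) ⊓ a + (t *: e) ⊓ b))  _.
    by rewrite bmeetC; apply: bmeet_subadd.
  by rewrite gD ![(t *: e) ⊓ _]bmeetC; apply: lerD; apply: band_sup_ub.
rewrite -lerBrDr; apply: band_sup_le => s s0.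
rewrite lerBrDr addrC -lerBrDr; apply: band_sup_le => t t0.
rewrite lerBrDr addrC -gD; apply: le_trans (band_sup_ub _ (addr_ge0 s0 t0)).
by apply: (pos_dual_le hg); rewrite scalerDl; apply: bmeet_superadd.
Qed.

Lemma band_supZ (c : R) a : 0 < c -> band_sup g e (c *: a) = c * band_sup g e a.
Proof.
have gZ := dualZ hg.1.
move=> c0; have cN0 := lt0r_neq0 c0.
have meetZ t : (c *: a) ⊓ (t *: e) = c *: (a ⊓ ((t / c) *: e)).
  by rewrite -bmeet_scaler ?ltW // scalerA mulrC divfK.
apply/eqP; rewrite eq_le; apply/andP; split.
  apply: band_sup_le => t t0; rewrite meetZ gZ ler_pM2l //.
  by apply: band_sup_ub; rewrite divr_ge0 // ltW.
rewrite -ler_pdivlMl //; apply: band_sup_le => t t0.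
rewrite ler_pdivlMl // -gZ.
by have := band_sup_ub (c *: a) (mulr_ge0 t0 (ltW c0)); rewrite meetZ mulfK.
Qed.

Lemma band_part_pos_dual : is_pos_dual (band_part g e).
Proof.
have [C C0 hC] := dual_bounded hg.1.
apply: (cone_ext_pos_dual band_supD (fun c a c0 _ => band_supZ a c0) (ltW C0)).
move=> a ha; split; first exact: band_sup_ge0.
exact: le_trans (band_sup_le_dual a) (le_trans (ler_norm _) (hC a)).
Qed.

Lemma band_partE a : 0 <=: a -> band_part g e a = band_sup g e a.
Proof. exact: (cone_extE band_supD). Qed.

Lemma band_part_self : g e <= band_part g e e.
Proof. by rewrite band_partE //; have := band_sup_ub e ler01; rewrite scale1r bmeet_l. Qed.
End BandPart.

Section DisjointBandParts.
Variables (g : E -> R) (e : nat -> E).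
Hypothesis hg : is_pos_dual g.
Hypothesis e0 : forall k, 0 <=: e k.
Hypothesis edisj : forall j k, (j < k)%N -> bdisjoint (e j) (e k).

Lemma band_part_sum_approx n a eps : 0 <=: a -> 0 < eps -> exists2 t, 0 <= t &
  \sum_(k < n) band_part g (e k) a <= \sum_(k < n) g (a ⊓ (t *: e k)) + eps.
Proof.
move=> ha; elim: n eps => [|n IH] eps ep; first by exists 0; rewrite // !big_ord0 add0r ltW.
have ep2 : 0 < eps / 2 by rewrite divr_gt0.
have [t1 t10 h1] := IH _ ep2.
have [t2 t20 h2] := @band_sup_adherent g (e n) hg a _ ep2.
exists (Num.max t1 t2); first by rewrite le_max t10.
have meet_max k t : t <= Num.max t1 t2 -> g (a ⊓ (t *: e k)) <= g (a ⊓ (Num.max t1 t2 *: e k)).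
  by move=> tm; apply/(pos_dual_le hg)/ble_meet2 => //; apply: bleZ2r.
have m1 : \sum_(k < n) g (a ⊓ (t1 *: e k)) <= \sum_(k < n) g (a ⊓ (Num.max t1 t2 *: e k)).
  by apply: ler_sum => k _; apply: meet_max; rewrite le_max lexx.
have m2 : g (a ⊓ (t2 *: e n)) <= g (a ⊓ (Num.max t1 t2 *: e n)).
  by apply: meet_max; rewrite le_max lexx orbT.
rewrite !big_ord_recr /= band_partE //; lra.
Qed.

Lemma band_part_sum_le n a : 0 <=: a -> \sum_(k < n) band_part g (e k) a <= g a.
Proof.
move=> ha; apply/ler_addgt0Pr => eps ep.
have [t t0 h] := band_part_sum_approx n ha ep; apply: le_trans h _; rewrite lerD2r.
rewrite -(dual_sum hg.1 n (fun k => a ⊓ (t *: e k))); apply: (pos_dual_le hg).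
have te k : 0 <=: t *: e k by apply: bscaler_ge0.
apply: (@bsum_disjoint_le n (fun k => a ⊓ (t *: e k))) => [k|k|j k jk]; first exact: bmeet_ge0.
  exact: bmeet_lel.
apply: ble_anti; last by apply: bmeet_ge0; apply: bmeet_ge0.
apply: ble_trans (ble_meet2 (bmeet_ler _ _) (bmeet_ler _ _)) _.
by rewrite bmeet_scaler // edisj // scaler0.
Qed.
End DisjointBandParts.

Definition psum (phs : nat -> E -> R) (a : E) (n : nat) : R := \sum_(k < n) phs k a.
Definition psup (phs : nat -> E -> R) (a : E) : R := sup (range (psum phs a)).
Definition ptail (phs : nat -> E -> R) (n : nat) : E -> R :=
  cone_ext (fun a => psup phs a - psum phs a n).

Section Tails.
Variables (g : E -> R) (phs : nat -> E -> R).
Hypothesis hg : is_pos_dual g.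
Hypothesis phs_pd : forall k, is_pos_dual (phs k).
Hypothesis phs_sum : forall n a, 0 <=: a -> psum phs a n <= g a.

Lemma psum_nondecreasing a : 0 <=: a -> nondecreasing_seq (psum phs a).
Proof.
move=> ha; apply/nondecreasing_seqP => n.
by rewrite /psum big_ord_recr /= lerDl; apply: (phs_pd n).2.
Qed.

Let psum_ub a : 0 <=: a -> has_ubound (range (psum phs a)).
Proof. by move=> ha; exists (g a) => _ [n _ <-]; apply: phs_sum. Qed.

Lemma psum_cvg a : 0 <=: a -> psum phs a @ \oo --> psup phs a.
Proof. by move=> ha; apply: nondecreasing_cvgn; [apply: psum_nondecreasing|apply: psum_ub]. Qed.

Lemma psum_le_psup a n : 0 <=: a -> psum phs a n <= psup phs a.
Proof. by move=> ha; apply: ub_le_sup; [apply: psum_ub|exists n]. Qed.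

Lemma psup_le a : 0 <=: a -> psup phs a <= g a.
Proof.
by move=> ha; apply: ge_sup; [exists (psum phs a 0), 0|move=> _ [n _ <-]; apply: phs_sum].
Qed.

Lemma psumD a b n : psum phs (a + b) n = psum phs a n + psum phs b n.
Proof. by rewrite /psum -big_split; apply: eq_bigr => k _; rewrite (dualD (phs_pd k).1). Qed.

Lemma psumZ c a n : psum phs (c *: a) n = c * psum phs a n.
Proof. by rewrite /psum mulr_sumr; apply: eq_bigr => k _; rewrite (dualZ (phs_pd k).1). Qed.

Lemma psupD a b : 0 <=: a -> 0 <=: b -> psup phs (a + b) = psup phs a + psup phs b.
Proof.
move=> ha hb; have h : psum phs (a + b) @ \oo --> psup phs a + psup phs b.
  have -> : psum phs (a + b) = psum phs a + psum phs b by apply/funext => n; rewrite psumD.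
  exact: cvgD (psum_cvg ha) (psum_cvg hb).
exact: (cvg_unique _ (psum_cvg (baddr_ge0 ha hb)) h).
Qed.

Lemma psupZ (c : R) a : 0 < c -> 0 <=: a -> psup phs (c *: a) = c * psup phs a.
Proof.
move=> c0 ha; have h : psum phs (c *: a) @ \oo --> c * psup phs a.
  have -> : psum phs (c *: a) = (fun n => c * psum phs a n) by apply/funext => n; rewrite psumZ.
  exact: cvgM (cvg_cst c) (psum_cvg ha).
exact: (cvg_unique _ (psum_cvg (bscaler_ge0 (ltW c0) ha)) h).
Qed.

Let tailD a b n : 0 <=: a -> 0 <=: b ->
  psup phs (a + b) - psum phs (a + b) n =
  (psup phs a - psum phs a n) + (psup phs b - psum phs b n).
Proof. by move=> ha hb; rewrite psupD // psumD opprD addrACA. Qed.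

Lemma ptailE n a : 0 <=: a -> ptail phs n a = psup phs a - psum phs a n.
Proof. exact: (cone_extE (fun a b => @tailD a b n)). Qed.

Lemma ptail_pos_dual n : is_pos_dual (ptail phs n).
Proof.
have [C C0 hC] := dual_bounded hg.1.
apply: (@cone_ext_pos_dual _ C) => [a b|c a c0 ha||a ha]; first exact: tailD.
- by rewrite psupZ // psumZ mulrBr.
- exact: ltW.
have := psum_le_psup n ha; have := psup_le ha; have := le_trans (ler_norm _) (hC a).
have : 0 <= psum phs a n by rewrite /psum sumr_ge0 // => k _; apply: (phs_pd k).2.
lra.
Qed.

Lemma ptail_norm_small : dual_order_continuous L ->
  forall eps, 0 < eps -> exists i0 : nat, forall i, (i0 <= i)%N ->
    forall x : E, `|x| <= 1 -> `|ptail phs i x| <= eps.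
Proof.
move=> doc eps ep.
apply: (doc nat (fun i j => (i <= j)%N) _ _ (inhabits 0%N) _ (ptail phs)) => //.
- by move=> i j k; apply: leq_trans.
- by move=> i j; exists (maxn i j); rewrite leq_maxl leq_maxr.
- by move=> i; case: (ptail_pos_dual i).
- move=> i j ij a ha; rewrite !ptailE // lerD2l lerN2.
  exact: psum_nondecreasing.
- by move=> i; case: (ptail_pos_dual i).
(* the tails decrease to 0: a common lower bound is below psup - psum N -> 0 *)
move=> h _ hle a ha /=.
apply/ler_addgt0Pr => e e0; rewrite add0r.
have /cvgr_dist_lt /(_ e e0) [N _ HN] := psum_cvg ha.
apply: le_trans (hle N a ha) _; rewrite ptailE //.
exact/ltW/(le_lt_trans (ler_norm _))/(HN N (leqnn N)).
Qed.
End Tails.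

Lemma pos_dual_disjoint_null (g : E -> R) (e : nat -> E) (M : R) :
  dual_order_continuous L -> is_pos_dual g ->
  (forall k, 0 <=: e k) -> (forall k, `|e k| <= M) ->
  (forall j k, (j < k)%N -> bdisjoint (e j) (e k)) ->
  (fun k => g (e k)) @ \oo --> 0.
Proof.
move=> doc hg e0 eM edisj.
pose phs k := band_part g (e k).
have phs_pd k : is_pos_dual (phs k) by exact: band_part_pos_dual.
have phs_sum n a : 0 <=: a -> psum phs a n <= g a by exact: band_part_sum_le.
have M1 : 0 < M + 1 by have := le_trans (normr_ge0 _) (eM 0%N); lra.
apply/cvgrPdist_le => eps ep.
have [i0 Hi0] := ptail_norm_small hg phs_pd phs_sum doc (divr_gt0 ep M1).
exists i0 => // k /= ik; rewrite sub0r normrN ger0_norm; last exact: hg.2.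
have tail_ge : g (e k) <= ptail phs k (e k).
  rewrite (ptailE phs_pd phs_sum) //; have := psum_le_psup phs_sum k.+1 (e0 k).
  have : g (e k) <= phs k (e k) by exact: band_part_self.
  by rewrite /psum big_ord_recr /=; lra.
have eM1 : `|(M + 1)^-1 *: e k| <= 1.
  rewrite normrZ gtr0_norm ?invr_gt0 // ler_pdivrMl // mulr1.
  by apply: le_trans (eM k) _; rewrite lerDl.
have := Hi0 k ik _ eM1; rewrite dualZ; last by case: (ptail_pos_dual hg phs_pd phs_sum k).
rewrite normrM gtr0_norm ?invr_gt0 // [eps / _]mulrC ler_pM2l ?invr_gt0 // => h.
by apply: le_trans tail_ge (le_trans (ler_norm _) h).
Qed.

Definition dweight (k : nat) : R := 2^-1 ^+ k.
(* dscale k >= (dweight j * dweight k)^-1 for j < k is what makes the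
   [disjointify z k] pairwise disjoint. *)
Definition dscale (k : nat) : R := (dweight k ^+ 2)^-1.
Definition dsum (z : nat -> E) (k : nat) : E := \sum_(j < k) z j.
Definition dseries (z : nat -> E) : E := limn (series (fun k => dweight k *: z k)).
Definition disjointify (z : nat -> E) (k : nat) : E :=
  bpos (z k - dscale k *: dsum z k - dweight k *: dseries z).

Lemma dweight_gt0 k : 0 < dweight k.
Proof. by rewrite exprn_gt0 // invr_gt0. Qed.

Lemma dweight_cvg0 : dweight @ \oo --> 0.
Proof. by apply: cvg_expr; rewrite gtr0_norm ?invr_gt0 // invf_lt1 // ltr1n. Qed.

Section Disjointification.
Variables (z : nat -> E) (M : R).
Hypothesis z0 : forall k, 0 <=: z k.
Hypothesis zM : forall k, `|z k| <= M.

Let u k := dweight k *: z k.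
Let u0 k : 0 <=: u k. Proof. exact/bscaler_ge0/z0/ltW/dweight_gt0. Qed.

Lemma dseries_cvg : series u @ \oo --> dseries z.
Proof.
apply: normed_cvg; apply: (@series_le_cvg _ _ (geometric M 2^-1)) => [n|n|n|].
- exact: normr_ge0.
- by rewrite /geometric /= mulr_ge0 ?exprn_ge0 ?invr_ge0 // (le_trans _ (zM 0%N)).
- by rewrite /u /geometric /= normrZ gtr0_norm ?dweight_gt0 // mulrC ler_wpM2r ?exprn_ge0 ?invr_ge0.
by apply: is_cvg_geometric_series; rewrite gtr0_norm ?invr_gt0 // invf_lt1 // ltr1n.
Qed.

Lemma dseries_ge k : u k <=: dseries z.
Proof.
apply/bsubr_ge0/(bcone_closed (cvgB dseries_cvg (cvg_cst (u k)))).
exists (k.+1) => // n /= kn; apply/bsubr_ge0; rewrite /series /= big_mkord.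
exact: bterm_le_sum.
Qed.

Lemma dseries_ge0 : 0 <=: dseries z.
Proof. exact: ble_trans (u0 0%N) (dseries_ge 0%N). Qed.

Lemma disjointify_ge0 k : 0 <=: disjointify z k.
Proof. exact: bpos_ge0. Qed.

Lemma disjointify_le k : disjointify z k <=: z k.
Proof.
rewrite -(bpos_id (z0 k)); apply: ble_pos2.
rewrite -addrA -opprD -{2}[z k]addr0; apply: ble_addl; rewrite -oppr0; apply: bleN2.
apply: baddr_ge0; apply: bscaler_ge0; rewrite ?invr_ge0 ?exprn_ge0 ?ltW ?dweight_gt0 //.
- exact: bsumr_ge0.
- exact: dseries_ge0.
Qed.

Lemma disjointify_disjoint j k : (j < k)%N ->
  bdisjoint (disjointify z j) (disjointify z k).
Proof.
move=> jk; set wj := dweight j; set wk := dweight k.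
have wj0 : 0 < wj := dweight_gt0 j; have wk0 : 0 < wk := dweight_gt0 k.
have C0 i : 0 <= dscale i by rewrite invr_ge0 exprn_ge0 // ltW // dweight_gt0.
have hC : (wj * wk)^-1 <= dscale k.
  rewrite /dscale expr2 lef_pV2 ?posrE ?mulr_gt0 // ler_pM2r //.
  by rewrite /wj /wk /dweight ler_wiXn2l // ?invr_ge0 // ?invf_le1 ?ler1n // ltnW.
apply: (@bdisjoint_le _ _ (bpos (z j - (wj * wk) *: z k)) (bpos (z k - dscale k *: z j))
  (disjointify_ge0 j) (disjointify_ge0 k)).
- apply: ble_pos2; rewrite -addrA -opprD; apply/ble_addl/bleN2.
  rewrite -[X in X <=: _]add0r; apply: bleD; first exact/bscaler_ge0/bsumr_ge0.
  by rewrite -scalerA; apply/ble_scale/dseries_ge/ltW.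
- apply: ble_pos2; rewrite -addrA -opprD; apply/ble_addl/bleN2.
  rewrite -[X in X <=: _]addr0; apply: bleD; last exact/bscaler_ge0/dseries_ge0/ltW.
  by apply/ble_scale/bterm_le_sum.
apply: (@bdisjoint_pos (wj * wk)^-1); first by rewrite invr_gt0 mulr_gt0.
rewrite scalerBr scalerA mulVf ?mulf_neq0 ?lt0r_neq0 // scale1r addrA subrK -scalerBl.
by apply/bsubr_ge0; rewrite sub0r -scaleNr opprB; apply/bscaler_ge0/z0; rewrite subr_ge0.
Qed.

Lemma pos_dual_disjointify_ge g k : is_pos_dual g ->
  g (z k) - g (z k ⊓ (dscale k *: dsum z k)) - dweight k * g (dseries z)
    <= g (disjointify z k).
Proof.
move=> hg; set v := dscale k *: dsum z k; set wx := dweight k *: dseries z.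
rewrite -(dualZ hg.1) -!(dualB hg.1); apply: (pos_dual_le hg).
rewrite -{1}(bmeet_add_pos (z k) v) [_ ⊓ _ + _]addrC addrK /disjointify -/v -/wx /bpos.
rewrite -[X in X - wx]/(bjoin L _ 0) -bjoin_addr add0r.
apply: ble_join2 => //; rewrite -oppr0; apply/bleN2/bscaler_ge0/dseries_ge0.
exact/ltW/dweight_gt0.
Qed.
End Disjointification.

Section UawNullPositive.
Variables (g : E -> R) (y : nat -> E) (M : R).
Hypothesis doc : dual_order_continuous L.
Hypothesis hg : is_pos_dual g.
Hypothesis y0 : forall n, 0 <=: y n.
Hypothesis yM : forall n, `|y n| <= M.
Hypothesis yu : forall u, 0 <=: u -> (fun n => g (y n ⊓ u)) @ \oo --> 0.

Lemma large_subseq_small_meets d : 0 < d ->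
  (forall N, exists2 n, (N <= n)%N & d < g (y n)) ->
  exists phi : nat -> nat, forall k, d < g (y (phi k)) /\
    g (y (phi k) ⊓ (dscale k *: dsum (y \o phi) k)) < d / 4.
Proof.
move=> d0 often; have d4 : 0 < d / 4 by rewrite divr_gt0.
have [|phi hphi] := @partial_sum_choice _ y (fun k s n => d < g (y n) /\
    (0 <=: s -> g (y n ⊓ (dscale k *: s)) < d / 4)).
  move=> k s; have [s0|ns] := pselect (0 <=: s); last first.
    by have [n _ dn] := often 0%N; exists n; split=> // /ns.
  have hs : 0 <=: dscale k *: s.
    by apply: bscaler_ge0 => //; rewrite invr_ge0 exprn_ge0 // ltW // dweight_gt0.
  have /cvgr_dist_lt /(_ _ d4) [N _ HN] := yu hs.
  have [n Nn dn] := often N; exists n; split => // _.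
  by have := HN n Nn; rewrite sub0r normrN; apply: le_lt_trans (ler_norm _).
exists phi => k; have [dk meetk] := hphi k; split => //.
by apply/meetk/(@bsumr_ge0 k (y \o phi)) => j; apply: y0.
Qed.

Lemma uaw_pos_dual_null : (fun n => g (y n)) @ \oo --> 0.
Proof.
apply/cvgrPdist_le => d d0.
have [//|not_ev] := pselect (\forall n \near \oo, `|0 - g (y n)| <= d); exfalso.
have [phi hphi] : exists phi : nat -> nat, forall k, d < g (y (phi k)) /\
    g (y (phi k) ⊓ (dscale k *: dsum (y \o phi) k)) < d / 4.
  apply: large_subseq_small_meets => // N; apply: contrapT => no; apply: not_ev.
  exists N => // n /= Nn; rewrite sub0r normrN ger0_norm; last exact: hg.2.
  by rewrite leNgt; apply/negP => dn; apply: no; exists n.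
have z0 k : 0 <=: (y \o phi) k by exact: y0.
have zM k : `|(y \o phi) k| <= M by exact: yM.
have e_null : (fun k => g (disjointify (y \o phi) k)) @ \oo --> 0.
  apply: (pos_dual_disjoint_null doc hg (disjointify_ge0 _)) _ (disjointify_disjoint z0 zM).
  by move=> k; apply: le_trans (zM k); apply: bnorm_le;
    [exact: disjointify_ge0|exact: disjointify_le z0 zM k].
have w_null : (fun k => dweight k * g (dseries (y \o phi))) @ \oo --> 0.
  by rewrite -(mul0r (g (dseries (y \o phi)))); exact: cvgMl dweight_cvg0.
have d4 : 0 < d / 4 by rewrite divr_gt0.
near \oo => k.
have [dk meetk] := hphi k; have := pos_dual_disjointify_ge z0 zM k hg.
have e_small : g (disjointify (y \o phi) k) < d / 4.
  near: k; move/cvgr_dist_lt: e_null => /(_ _ d4); apply: filterS => k.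
  by rewrite sub0r normrN; apply: le_lt_trans (ler_norm _).
have w_small : dweight k * g (dseries (y \o phi)) < d / 4.
  near: k; move/cvgr_dist_lt: w_null => /(_ _ d4); apply: filterS => k.
  by rewrite sub0r normrN; apply: le_lt_trans (ler_norm _).
rewrite /= in dk; lra.
Unshelve. all: by end_near.
Qed.
End UawNullPositive.

Lemma dual_abs_le f x : is_dual f ->
  `|f x| <= dual_pos f (babs L x) + dual_neg f (babs L x).
Proof.
move=> hf; have [C C0 hC] := dual_bounded hf.
have hp := dual_pos_pos_dual hf (ltW C0) hC; have hn := dual_neg_pos_dual hf (ltW C0) hC.
rewrite -(dual_posBneg hf x); apply: le_trans (ler_normB _ _) _.
exact: lerD (pos_dual_abs _ hp) (pos_dual_abs _ hn).
Qed.

Lemma uaw_null_bounded_weakly_null (x : nat -> E) (M : R) :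
  dual_order_continuous L -> (forall n, `|x n| <= M) -> uaw_null L x -> weakly_null x.
Proof.
move=> doc xM xu f hf; have [C C0 hC] := dual_bounded hf.
have abs_null h : is_pos_dual h -> (fun n => h (babs L (x n))) @ \oo --> 0.
  move=> hh; apply: (uaw_pos_dual_null (M := M) doc hh (fun n => babs_ge0 _)).
    by move=> n; rewrite bnorm_abs.
  by move=> u u0; apply: xu _ u0 _ hh.1.
have bound_null : (fun n => dual_pos f (babs L (x n)) + dual_neg f (babs L (x n)))
    @ \oo --> 0.
  rewrite -[0]addr0; apply: cvgD; apply: abs_null.
    exact: dual_pos_pos_dual hf (ltW C0) hC.
  exact: dual_neg_pos_dual hf (ltW C0) hC.
have lower_null : (fun n => - (dual_pos f (babs L (x n)) + dual_neg f (babs L (x n))))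
    @ \oo --> 0 by rewrite -oppr0; exact: cvgN.
apply: (squeeze_cvgr _ lower_null bound_null).
by near=> n; rewrite -ler_norml dual_abs_le.
Unshelve. all: by end_near.
Qed.
End BanachLattice.

Theorem proposition2p1 (R : realType) (E : completeNormedModType R)
  (L : banach_lattice E) (X : completeNormedModType R) (T : E -> X) :
  dual_order_continuous L ->
  is_operator T ->
  dunford_pettis T ->
  uaw_dunford_pettis L T.
Proof.
move=> doc _ dp x [M xM] xu.
exact/dp/(uaw_null_bounded_weakly_null doc xM xu).
Qed.
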